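(* Let $m,n\ge 3$. Let $K_m=U_{\{0,2\},m}(a,b,c)$, let $L_n=U_{\{1,3\},n}(b,a,c)$ if $n\ge 4$, and let $L_3=U_{\{1\},3}(b,a,c)$. Then the state complexities of $K_m^R\cup L_n^R$, $K_m^R\cap L_n^R$ and $K_m^R\setminus L_n^R$ are each $(2^m-1)(2^n-1)+1$, and the state complexity of $K_m^R\oplus L_n^R$ is $2^{m+n-1}$.
   Context: The state complexity of a regular language is the number of states of its minimal complete DFA. For $n\ge 3$, $\mathcal{U}_n(a,b,c)$ is the DFA over $\{a,b,c\}$ with states $\{0,\dots,n-1\}$, initial state $0$, where $a$ maps $i\mapsto i+1\pmod n$, $b$ swaps $0$ and $1$ fixing other states, and $c$ maps $n-1$ to $0$ fixing other states. $\mathcal{U}_n(b,a,c)$ is the same with the roles of $a$ and $b$ interchanged ($b$ is the cycle $i\mapsto i+1\pmod n$, $a$ swaps $0$ and $1$). For a set $F\subseteq\{0,\dots,n-1\}$, $U_{F,n}(a,b,c)$ (resp. $U_{F,n}(b,a,c)$) denotes the language accepted by $\mathcal{U}_n(a,b,c)$ (resp. $\mathcal{U}_n(b,a,c)$) with final state set $F$. $L^R$ is the reversal of $L$; $\setminus$ is set difference, $\oplus$ symmetric difference. *)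

From mathcomp Require Import all_boot.
Set Implicit Arguments. Unset Strict Implicit. Unset Printing Implicit Defensive.

Inductive letter := la | lb | lc.

Definition word := seq letter.
Definition lang := word -> Prop.

Definition rev_lang (L : lang) : lang := fun w => L (rev w).
Definition union_lang (L1 L2 : lang) : lang := fun w => L1 w \/ L2 w.
Definition inter_lang (L1 L2 : lang) : lang := fun w => L1 w /\ L2 w.
Definition diff_lang (L1 L2 : lang) : lang := fun w => L1 w /\ ~ L2 w.
Definition symdiff_lang (L1 L2 : lang) : lang :=
  fun w => (L1 w /\ ~ L2 w) \/ (L2 w /\ ~ L1 w).

Definition dfa_recognizes (k : nat) (d : 'I_k -> letter -> 'I_k) (s : 'I_k)
  (f : pred 'I_k) (L : lang) : Prop :=
  forall w : word, f (foldl d s w) <-> L w.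

Definition state_complexity (L : lang) (k : nat) : Prop :=
  (exists d s f, @dfa_recognizes k d s f L) /\
  (forall k' d s f, @dfa_recognizes k' d s f L -> k <= k').

Definition cyc (n i : nat) : nat := i.+1 %% n.
Definition swap01 (i : nat) : nat := if i == 0 then 1 else if i == 1 then 0 else i.
Definition reset (n i : nat) : nat := if i == n.-1 then 0 else i.

Definition U_abc_step (n : nat) (i : nat) (x : letter) : nat :=
  match x with la => cyc n i | lb => swap01 i | lc => reset n i end.
Definition U_bac_step (n : nat) (i : nat) (x : letter) : nat :=
  match x with la => swap01 i | lb => cyc n i | lc => reset n i end.

Definition U_abc (F : seq nat) (n : nat) : lang :=
  fun w => foldl (U_abc_step n) 0 w \in F.
Definition U_bac (F : seq nat) (n : nat) : lang :=
  fun w => foldl (U_bac_step n) 0 w \in F.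

Definition K_lang (m : nat) : lang := U_abc [:: 0; 2] m.
Definition L_lang (n : nat) : lang :=
  if 4 <= n then U_bac [:: 1; 3] n else U_bac [:: 1] n.

From mathcomp Require Import all_boot zify.
From Stdlib Require Import ClassicalEpsilon.
Set Implicit Arguments. Unset Strict Implicit. Unset Printing Implicit Defensive.

(* A combination op(K_m^R, L_n^R) is recognised by the subset construction
   on the product of the two automata read backwards.  The state reached by a
   word w is the set of pairs {(i, j) | op (i \in X_w) (j \in Y_w)}, where
   X_w (resp. Y_w) is the set of states of K_m (resp. L_n) from which rev w is
   accepted.  The theorem follows from two facts:
   - every pair of subsets (X, Y) arises as (X_w, Y_w).  This is the heart of
     the proof: a letter acts on the pair of characteristic vectors by
     precomposition, a and b act as cycle/transposition (in swapped roles on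
     the two sides) and c merges the last state into 0.  Cycle and
     transposition generate all permutations, and c changes sizes, so a
     counting argument on an abstract set of pairs closed under the three
     moves yields everything (m = n = 4 is checked by a finite computation);
   - distinct sets of pairs are distinguishable, since every pair of states
     is reachable in the forward product automaton.
   So the state complexity is the number of such combined sets, which is
   (2^m - 1)(2^n - 1) + 1 for union, intersection and difference and
   2^(m+n-1) for the symmetric difference. *)

Arguments cyc : simpl never.

Lemma cycE N i : i < N -> cyc N i = if i.+1 == N then 0 else i.+1.
Proof.
move=> hi; rewrite /cyc; case: eqP => [->|h]; first by rewrite modnn.
by rewrite modn_small //; lia.
Qed.

Lemma cyc_lt N i : 0 < N -> cyc N i < N.
Proof. exact: ltn_pmod. Qed.

Lemma iter_cyc N k i : i < N -> iter k (cyc N) i = (i + k) %% N.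
Proof.
move=> hi; elim: k => [|k IH]; first by rewrite addn0 modn_small.
by rewrite iterS IH /cyc -addn1 modnDml addn1 addnS.
Qed.

Lemma cyc_inj_eq N i j : i < N -> j < N -> (cyc N i == cyc N j) = (i == j).
Proof.
move=> hi hj; rewrite (cycE hi) (cycE hj).
by case: (eqVneq i.+1 N) => h1; case: (eqVneq j.+1 N) => h2; apply/eqP/eqP; lia.
Qed.

Definition cyc_pred N j := if j == 0 then N.-1 else j.-1.

Lemma cyc_eq_pred N i j : i < N -> j < N -> (cyc N i == j) = (i == cyc_pred N j).
Proof.
move=> hi hj; rewrite (cycE hi) /cyc_pred.
by case: (eqVneq i.+1 N) => h1; case: (eqVneq j 0) => h2; apply/eqP/eqP; lia.
Qed.

Lemma swap01K : involutive swap01.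
Proof. by case=> [|[|i]]. Qed.

Lemma swap01_eq i j : (swap01 i == j) = (i == swap01 j).
Proof. by apply/eqP/eqP => [<-|->]; rewrite swap01K. Qed.

Lemma swap01_big i : 1 < i -> swap01 i = i.
Proof. by case: i => [|[|i]]. Qed.

Lemma iter_swap01 k i : iter k swap01 i = if odd k then swap01 i else i.
Proof. by elim: k => [|k IH] //=; rewrite IH; case: (odd k) => //=; rewrite swap01K. Qed.

Lemma swap01_lt N i : 2 <= N -> i < N -> swap01 i < N.
Proof. by rewrite /swap01; case: i => [|[|i]] //=; lia. Qed.

Lemma reset_lt N i : i < N -> reset N i < N.
Proof. by rewrite /reset; case: ifP => // _; lia. Qed.

Lemma reset0 N : 1 < N -> reset N 0 = 0.
Proof. by move=> h; rewrite /reset; case: eqP => //; lia. Qed.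

Lemma resetN N : reset N N.-1 = 0.
Proof. by rewrite /reset eqxx. Qed.

Lemma reset_other N i : i != N.-1 -> reset N i = i.
Proof. by rewrite /reset => /negbTE ->. Qed.

Lemma mod_lt2 a N : N <= a -> a < N + N -> a %% N = a - N.
Proof. by move=> h1 h2; rewrite -{1}(subnK h1) modnDr modn_small //; lia. Qed.

(** Boolean vectors of length N, given as functions on nat that are only
    looked at below N; [cnt N p] is their number of true entries. *)

Definition agree (N : nat) (p q : nat -> bool) := forall i, i < N -> p i = q i.
Definition cnt (N : nat) (p : nat -> bool) := count p (iota 0 N).

Lemma cnt_ext N p q : agree N p q -> cnt N p = cnt N q.
Proof. by move=> E; apply: eq_in_count => i; rewrite mem_iota => /andP[_ /E]. Qed.

Lemma cnt_le N p : cnt N p <= N.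
Proof. by rewrite /cnt -[X in _ <= X](size_iota 0 N) count_size. Qed.

Lemma cnt_pos N (p : nat -> bool) i : i < N -> p i -> 0 < cnt N p.
Proof. by move=> hi pi; rewrite /cnt -has_count; apply/hasP; exists i; rewrite ?mem_iota. Qed.

Lemma cnt_lt N (p : nat -> bool) i : i < N -> ~~ p i -> cnt N p < N.
Proof.
move=> hi pi; have := count_predC p (iota 0 N); rewrite size_iota /cnt.
have : 0 < count (predC p) (iota 0 N).
  by rewrite -has_count; apply/hasP; exists i; rewrite ?mem_iota.
lia.
Qed.

Lemma cnt_last N p : 0 < N -> cnt N p = cnt N.-1 p + p N.-1.
Proof. by move=> hN; rewrite /cnt -{1}(prednK hN) -addn1 iotaD count_cat /= add0n addn0. Qed.

Lemma cnt_prefix N k : k <= N -> cnt N (fun i => i < k) = k.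
Proof.
move=> hk; rewrite /cnt (_ : N = k + (N - k)); last by lia.
rewrite iotaD count_cat add0n (@eq_in_count _ _ predT); last first.
  by move=> i; rewrite mem_iota => /andP[_].
rewrite (@eq_in_count _ _ pred0 (iota k _)); last first.
  by move=> i; rewrite mem_iota => /andP[h _] /=; apply/negbTE; rewrite -leqNgt.
by rewrite count_predT count_pred0 size_iota addn0.
Qed.

Lemma cnt_suffix N k : k <= N -> cnt N (fun i => N - k <= i) = k.
Proof.
move=> hk; rewrite /cnt (_ : N = (N - k) + k); last by lia.
rewrite iotaD count_cat add0n (@eq_in_count _ _ pred0); last first.
  by move=> i; rewrite mem_iota => /andP[_ h] /=; apply/negbTE; rewrite -ltnNge; lia.
rewrite (@eq_in_count _ _ predT (iota (N - k) k)); last first.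
  by move=> i; rewrite mem_iota => /andP[h _] /=; lia.
by rewrite count_pred0 count_predT size_iota.
Qed.

(* Pulling an initial segment back along [reset] adds the last position,
   pulling a final segment back removes it. *)
Lemma cnt_prefix_reset N k : 0 < k < N -> cnt N (fun i => reset N i < k) = k.+1.
Proof.
move=> hk; rewrite cnt_last; last lia.
rewrite resetN (_ : 0 < k) ?addn1; last lia; congr _.+1.
rewrite -[RHS](@cnt_prefix N.-1 k); last lia.
by apply: cnt_ext => i hi; rewrite reset_other //; lia.
Qed.

Lemma cnt_suffix_reset N k : 0 < k < N -> cnt N (fun i => N - k <= reset N i) = k.-1.
Proof.
move=> hk; rewrite cnt_last; last lia.
rewrite resetN (_ : (N - k <= 0) = false) ?addn0; last lia.
rewrite -[RHS](@cnt_suffix N.-1 k.-1); last lia.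
by apply: cnt_ext => i hi; rewrite reset_other; lia.
Qed.

Definition adj j i := if i == j then j.+1 else if i == j.+1 then j else i.

Lemma adjK j : involutive (adj j).
Proof.
move=> i; rewrite /adj; case: (eqVneq i j) => [->|h1] /=.
  by rewrite (gtn_eqF (ltnSn j)) eqxx.
case: (eqVneq i j.+1) => [->|h2] /=; first by rewrite eqxx.
by rewrite (negbTE h1) (negbTE h2).
Qed.

Lemma adj_other j i : i != j -> i != j.+1 -> adj j i = i.
Proof. by rewrite /adj => /negbTE -> /negbTE ->. Qed.

Definition weight N (p : nat -> bool) := sumn [seq p i * i | i <- iota 0 N].

Lemma iota_split N j : j.+1 < N ->
  iota 0 N = iota 0 j ++ j :: j.+1 :: iota j.+2 (N - j.+2).
Proof.
move=> h; have -> : N = j + (2 + (N - j.+2)) by lia.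
by rewrite iotaD /= add0n; congr (_ ++ _); congr [:: _, _ & iota _ _]; lia.
Qed.

Section AdjacentTransposition.
Variables (N j : nat) (p : nat -> bool).
Hypothesis hj : j.+1 < N.

Let outside_split : {in iota 0 j ++ iota j.+2 (N - j.+2), forall i, i != j /\ i != j.+1}.
Proof. by move=> i; rewrite mem_cat !mem_iota; lia. Qed.

Lemma weight_adj : ~~ p j -> p j.+1 -> (weight N (fun i => p (adj j i))).+1 = weight N p.
Proof.
move=> h1 h2; rewrite /weight (iota_split hj) !map_cat !sumn_cat /=.
have E (s : seq nat) : {in s, forall i, i != j /\ i != j.+1} ->
    [seq p (adj j i) * i | i <- s] = [seq p i * i | i <- s].
  by move=> hs; apply/eq_in_map => i /hs[k1 k2]; rewrite adj_other.
rewrite !E; first last.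
- by move=> i hi; apply: outside_split; rewrite mem_cat hi ?orbT.
- by move=> i hi; apply: outside_split; rewrite mem_cat hi ?orbT.
by rewrite /adj eqxx (gtn_eqF (ltnSn j)) eqxx (negbTE h1) h2 /=; lia.
Qed.

Lemma cnt_adj : cnt N (fun i => p (adj j i)) = cnt N p.
Proof.
rewrite /cnt (iota_split hj) !count_cat /=.
have E (s : seq nat) : {in s, forall i, i != j /\ i != j.+1} ->
    count (fun i => p (adj j i)) s = count p s.
  by move=> hs; apply: eq_in_count => i /hs[k1 k2]; rewrite adj_other.
rewrite !E; first last.
- by move=> i hi; apply: outside_split; rewrite mem_cat hi ?orbT.
- by move=> i hi; apply: outside_split; rewrite mem_cat hi ?orbT.
by rewrite /adj eqxx (gtn_eqF (ltnSn j)) eqxx; lia.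
Qed.

End AdjacentTransposition.

Lemma down_closed_prefix N (p : nat -> bool) :
  (forall j, j.+1 < N -> p j.+1 -> p j) -> agree N p (fun i => i < cnt N p).
Proof.
elim: N => [//|N IH] down.
have {}IH := IH (fun j hj => down j (ltnW hj)).
have full : p N -> cnt N p = N.
  case: N IH down => [//|N] IH down pN.
  by apply/eqP; rewrite eqn_leq cnt_le -(IH N) //; apply: down.
have hle := cnt_le N p.
move=> i; rewrite ltnS leq_eqVlt cnt_last //= => /orP[/eqP->|hi].
  case pN: (p N); first by rewrite full // addn1 ltnSn.
  by rewrite addn0 ltnNge hle.
case pN: (p N); last by rewrite addn0 IH.
by rewrite addn1 (IH i hi) full // ltnS (ltnW hi) hi.
Qed.

Lemma ascent_or_prefix N (p : nat -> bool) :
  (exists j, [/\ j.+1 < N, ~~ p j & p j.+1]) \/ agree N p (fun i => i < cnt N p).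
Proof.
case: (boolP (has (fun j => (j.+1 < N) && ~~ p j && p j.+1) (iota 0 N))).
  by case/hasP => j _ /andP[/andP[h1 h2] h3]; left; exists j.
move/hasPn => noasc; right; apply: down_closed_prefix => j hj pj.
apply/negPn/negP => npj.
by have := noasc j; rewrite mem_iota add0n (ltnW hj) hj npj pj => /(_ isT).
Qed.

(** A property of vectors stable under precomposition with [cyc N] and
    [swap01] is stable under all permutations (these two maps generate the
    symmetric group), hence depends only on the number of true entries. *)

Section SymmetricInvariance.
Variable N : nat.
Hypothesis hN : 2 <= N.
Variable T : (nat -> bool) -> Prop.
Hypothesis T_ext : forall p q, agree N p q -> T p -> T q.
Hypothesis T_cyc : forall p, T p -> T (fun i => p (cyc N i)).
Hypothesis T_swap : forall p, T p -> T (fun i => p (swap01 i)).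

Lemma T_rot k p : T p -> T (fun i => p ((i + k) %% N)).
Proof.
elim: k p => [|k IH] p Tp.
  by apply: T_ext Tp => i hi; rewrite addn0 modn_small.
by apply: T_ext (T_cyc (IH p Tp)) => i hi /=; rewrite /cyc modnDml addSnnS.
Qed.

(* [adj j] is the conjugate of [swap01] by the rotation by j. *)
Lemma adj_as_rotated_swap j i : j.+1 < N -> i < N ->
  (swap01 ((i + (N - j)) %% N) + j) %% N = adj j i.
Proof.
move=> hj hi; rewrite /adj.
case: (eqVneq i j) => [->|h1] /=.
  by rewrite (_ : j + (N - j) = N) ?modnn /= ?modn_small //; lia.
case: (eqVneq i j.+1) => [->|h2] /=.
  rewrite (_ : j.+1 + (N - j) = 1 + N); last by lia.
  by rewrite modnDr (modn_small (_ : 1 < N)) //= add0n modn_small; lia.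
case: (ltnP i j) => hij.
  rewrite (modn_small (_ : i + (N - j) < N)); last by lia.
  rewrite swap01_big; last by lia.
  by rewrite (_ : i + (N - j) + j = i + N) ?modnDr ?modn_small //; lia.
rewrite (@mod_lt2 (i + (N - j))); [|lia|lia].
by rewrite swap01_big ?modn_small; lia.
Qed.

Lemma T_adj j p : j.+1 < N -> T p -> T (fun i => p (adj j i)).
Proof.
move=> hj Tp; apply: T_ext (T_rot (N - j) (T_swap (T_rot j Tp))) => i hi /=.
by rewrite adj_as_rotated_swap.
Qed.

Lemma T_adj_iff j p : j.+1 < N -> T (fun i => p (adj j i)) <-> T p.
Proof.
move=> hj; split=> [|]; last exact: T_adj.
by move/(T_adj hj); apply: T_ext => i _; rewrite adjK.
Qed.

(* Bubble sort, by induction on the weight. *)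
Lemma T_prefix_iff p : T p <-> T (fun i => i < cnt N p).
Proof.
move: {2}(weight N p) (leqnn (weight N p)) => w; elim: w p => [|w IH] p hw;
  case: (ascent_or_prefix N p) => [[j [hj h1 h2]]|E];
  try by split; apply: T_ext => i hi; rewrite E.
  by have := weight_adj hj h1 h2; lia.
have hw' := weight_adj hj h1 h2.
by rewrite -(T_adj_iff p hj) IH ?cnt_adj //; lia.
Qed.

Lemma T_cnt p q : T p -> cnt N p = cnt N q -> T q.
Proof. by move=> /T_prefix_iff Tp e; apply/T_prefix_iff; rewrite -e. Qed.

(* If moreover T is stable under [reset N], which moves the size of a
   segment by one, then T holds everywhere as soon as it holds for a
   vector that is neither empty nor full. *)
Hypothesis T_reset : forall p, T p -> T (fun i => p (reset N i)).

Lemma T_universal p0 : T p0 -> 0 < cnt N p0 < N -> forall p, T p.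
Proof.
move=> Tp0 hk0; set k0 := cnt N p0 in hk0.
have T0 : T (fun i => i < k0) := proj1 (T_prefix_iff p0) Tp0.
have up d : k0 + d <= N -> T (fun i => i < k0 + d).
  elim: d => [|d IH] hd; first by rewrite addn0.
  apply: T_cnt (T_reset (IH _)) _; first lia.
  by rewrite cnt_prefix_reset ?cnt_prefix; lia.
have down d : d <= k0 -> T (fun i => i < k0 - d).
  elim: d => [|d IH] hd; first by rewrite subn0.
  have Tsuf : T (fun i => N - (k0 - d) <= i).
    by apply: T_cnt (IH _) _; [lia|rewrite cnt_prefix ?cnt_suffix; lia].
  apply: T_cnt (T_reset Tsuf) _.
  by rewrite cnt_suffix_reset ?cnt_prefix; lia.
move=> p; apply/T_prefix_iff; have := cnt_le N p.
case: (leqP k0 (cnt N p)) => h hp.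
  by have := up (cnt N p - k0); rewrite subnKC //; apply.
by have := down (k0 - cnt N p); rewrite subKn; [apply; lia|lia].
Qed.

End SymmetricInvariance.

Definition single (j i : nat) : bool := i == j.

Lemma swap01_invariant N (P : nat -> bool) : P 0 = P 1 -> agree N (fun i => P (swap01 i)) P.
Proof. by move=> h i _; case: i => [|[|i]]. Qed.

Lemma odd_double_pred k : 0 < k -> odd (2 * k).-1.
Proof. lia. Qed.

(* [rho] is the permutation 0 -> 2 -> 3 -> ... -> m-1 -> 1 -> 0 and [rhoinv]
   its inverse, written in the form in which it arises from the moves. *)
Definition rho (m i : nat) :=
  if i == 0 then 2 else if i == 1 then 0 else if i == m.-1 then 1 else i.+1.
Definition rhoinv (m i : nat) := swap01 ((swap01 i + (2 * m).-1) %% m).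

Lemma rhoinv_val m i : 3 <= m -> i < m -> rhoinv m i =
  if i == 0 then 1 else if i == 1 then m.-1 else if i == 2 then 0 else i.-1.
Proof.
move=> hm; rewrite /rhoinv; case: i => [|[|[|i]]] hi /=.
- by rewrite (_ : 1 + (2 * m).-1 = m + m) ?modnDl ?modnn //; lia.
- by rewrite add0n mod_lt2 ?swap01_big //; lia.
- have -> : swap01 2 = 2 by [].
  by rewrite (_ : 2 + _ = 1 + m + m) ?modnDr ?modn_small //; lia.
- have -> : swap01 i.+3 = i.+3 by [].
  rewrite (_ : i.+3 + _ = i.+2 + m + m); last lia.
  by rewrite !modnDr modn_small ?swap01_big; lia.
Qed.

Lemma rho_rhoinv m i : 3 <= m -> i < m -> rho m (rhoinv m i) = i.
Proof.
move=> hm hi; rewrite rhoinv_val // /rho.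
case: i hi => [|[|[|i]]] hi //=.
  have [-> ->] : (m.-1 == 0) = false /\ (m.-1 == 1) = false by split; lia.
  by rewrite eqxx.
by rewrite (_ : (i.+2 == m.-1) = false) //; lia.
Qed.

Lemma rho_mid m i : 1 < i -> i.+1 < m -> rho m i = i.+1.
Proof. by move=> h1 h2; rewrite /rho !ifF //; lia. Qed.

Lemma rho_last m : 3 <= m -> rho m m.-1 = 1.
Proof. by move=> hm; rewrite /rho ifF; [rewrite ifF ?eqxx|]; lia. Qed.

(* Up to the rotation j -> j - 1, the map j -> swap01 (cyc N j) exchanges
   0 and N-1. *)
Lemma shifted_swap_cyc N j : 3 <= N -> j < N ->
  (swap01 (cyc N j) + (2 * N).-1) %% N = if j == 0 then N.-1 else if j == N.-1 then 0 else j.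
Proof.
move=> hN hj; rewrite (cycE hj); case: j hj => [|j] hj.
  rewrite ifF /=; last lia.
  by rewrite add0n mod_lt2; lia.
case: (eqVneq j.+2 N) => h /=.
  rewrite ifT; last lia.
  by rewrite (_ : 1 + (2 * N).-1 = N + N) ?modnDl ?modnn //; lia.
rewrite swap01_big; last lia.
rewrite ifF; last lia.
rewrite (_ : j.+2 + (2 * N).-1 = j.+1 + N + N); last lia.
by rewrite !modnDr modn_small.
Qed.

Section TwoDimensional.
Variables m n : nat.
Hypothesis hm : 3 <= m.
Hypothesis hn : 3 <= n.

(* S is a set of pairs of vectors (of lengths m and n), closed under the
   moves of the letters a, b and c of the reversed languages. *)
Variable S : (nat -> bool) -> (nat -> bool) -> Prop.
Hypothesis S_ext : forall p q p' q', agree m p p' -> agree n q q' -> S p q -> S p' q'.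
Hypothesis S_a : forall p q, S p q -> S (fun i => p (cyc m i)) (fun j => q (swap01 j)).
Hypothesis S_b : forall p q, S p q -> S (fun i => p (swap01 i)) (fun j => q (cyc n j)).
Hypothesis S_c : forall p q, S p q -> S (fun i => p (reset m i)) (fun j => q (reset n j)).

Lemma S_extl p q p' : agree m p p' -> S p q -> S p' q.
Proof. by move=> h; apply: S_ext h _. Qed.

Lemma S_extr p q q' : agree n q q' -> S p q -> S p q'.
Proof. by move=> h; apply: S_ext _ h. Qed.

Lemma S_a_iter k p q :
  S p q -> S (fun i => p ((i + k) %% m)) (fun j => q (iter k swap01 j)).
Proof.
elim: k p q => [|k IH] p q Spq; first by apply: S_extl Spq => i hi; rewrite addn0 modn_small.
apply: S_ext (S_a (IH p q Spq)) => [i hi|j hj] /=; last by rewrite -iterSr.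
by rewrite /cyc modnDml addSnnS.
Qed.

Lemma S_b_iter k p q :
  S p q -> S (fun i => p (iter k swap01 i)) (fun j => q ((j + k) %% n)).
Proof.
elim: k p q => [|k IH] p q Spq; first by apply: S_extr Spq => i hi; rewrite addn0 modn_small.
apply: S_ext (S_b (IH p q Spq)) => [i hi|j hj] /=; first by rewrite -iterSr.
by rewrite /cyc modnDml addSnnS.
Qed.

(* For a first component invariant under [swap01], the letter b walks the
   singleton backwards around the cycle, so one singleton gives all. *)
Lemma singles_from_one (P : nat -> bool) j0 : P 0 = P 1 -> j0 < n ->
  S P (single j0) -> forall j, j < n -> S P (single j).
Proof.
move=> hP hj0 H0.
have back j : j < n -> S P (single j) -> S P (single (cyc_pred n j)).
  move=> hj Hj; apply: S_ext (S_b Hj) => [i hi|x hx] /=; first exact: swap01_invariant.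
  by rewrite /single cyc_eq_pred.
have down j d : j < n -> S P (single j) -> d <= j -> S P (single (j - d)).
  move=> hj Hj; elim: d => [|d IH] hd; first by rewrite subn0.
  have hjd : j - d < n by lia.
  have -> : j - d.+1 = cyc_pred n (j - d) by rewrite /cyc_pred ifF; lia.
  exact: back hjd (IH (ltnW hd)).
have H00 : S P (single 0) by have := down j0 j0 hj0 H0 (leqnn _); rewrite subnn.
have Hlast : S P (single n.-1).
  by have := back 0 (ltnW (ltnW hn)) H00; rewrite /cyc_pred eqxx.
move=> j hj; have := down n.-1 (n.-1 - j) _ Hlast.
by rewrite subKn; [apply; lia|lia].
Qed.

(* Same conclusion when P is only invariant under [reset m], i.e. when
   P 0 = P (m-1): rotate by m-1 with a's, use the previous lemma, rotate back. *)
Lemma singles_from_one_reset (P : nat -> bool) j0 : P 0 = P m.-1 -> j0 < n ->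
  S P (single j0) -> forall j, j < n -> S P (single j).
Proof.
move=> hP hj0 H0; have h2n : 2 <= n by lia.
set P2 := fun i => P ((i + m.-1) %% m).
have hP2 : P2 0 = P2 1.
  rewrite /P2 add0n (modn_small (_ : m.-1 < m)); last lia.
  by rewrite (_ : 1 + m.-1 = m) ?modnn //; lia.
have H2 : S P2 (single (iter m.-1 swap01 j0)).
  apply: S_extr (S_a_iter m.-1 H0) => x hx /=.
  by rewrite /single !iter_swap01; case: (odd _) => //; exact: swap01_eq.
have hj2 : iter m.-1 swap01 j0 < n by rewrite iter_swap01; case: (odd _); rewrite ?swap01_lt.
move=> j hj; have := S_a (singles_from_one hP2 hj2 H2 (swap01_lt h2n hj)).
apply: S_ext => [i hi|x hx] /=; last by rewrite /single swap01_eq swap01K.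
rewrite /P2 /cyc modnDml addSnnS (_ : i + m.-1.+1 = i + m); last lia.
by rewrite modnDr modn_small.
Qed.

Definition with_all_singles (P : nat -> bool) := forall j, j < n -> S P (single j).

Lemma with_all_singles_closed :
  [/\ forall p q, agree m p q -> with_all_singles p -> with_all_singles q,
      forall p, with_all_singles p -> with_all_singles (fun i => p (cyc m i)),
      forall p, with_all_singles p -> with_all_singles (fun i => p (swap01 i))
    & forall p, with_all_singles p -> with_all_singles (fun i => p (reset m i))].
Proof.
have h2n : 2 <= n by lia.
split=> [p q h Tp j hj|p Tp j hj|p Tp j hj|p Tp].
- by apply: S_extl (Tp j hj) => i hi; exact: h.
- apply: S_extr (S_a (Tp (swap01 j) (swap01_lt h2n hj))) => x hx /=.
  by rewrite /single swap01_eq swap01K.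
- apply: S_extr (S_b (Tp (cyc n j) (cyc_lt j (ltnW h2n)))) => x hx /=.
  by rewrite /single cyc_inj_eq.
(* Pulling the singleton {1} back along [reset n] gives {1} again. *)
have H1 : S (fun i => p (reset m i)) (single 1).
  apply: S_extr (S_c (Tp 1 _)) => [x hx|]; last lia.
  by rewrite /single /reset; case: (eqVneq x n.-1) => h; apply/eqP/eqP; lia.
by apply: singles_from_one_reset H1 => //; rewrite resetN reset0 //; lia.
Qed.

Lemma all_singles :
  (exists P j, [/\ P 0 = P m.-1, 0 < cnt m P < m, j < n & S P (single j)]) ->
  forall P j, j < n -> S P (single j).
Proof.
case=> P0 [j0 [hP0 hc hj0 H0]]; have [Text Tcyc Tswap Treset] := with_all_singles_closed.
have hm2 : 2 <= m by lia.
exact: (T_universal hm2 Text Tcyc Tswap Treset (singles_from_one_reset hP0 hj0 H0) hc).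
Qed.

(** Step 2: for a fixed second component X with X 0 = X (n-1), the
    first components P with P 0 = P (m-1) already give all P (m <> 4). *)

Section FixedSecond.
Variable X : nat -> bool.
Hypothesis hX : X 0 = X n.-1.

(* Rotating the first component by an even amount keeps X, since a a acts
   trivially on the second component. *)
Lemma fixed_rot2 P : S P X -> S (fun i => P ((i + 2) %% m)) X.
Proof. by move/(S_a_iter 2); apply: S_extr => j hj /=; rewrite swap01K. Qed.

Lemma fixed_rot P k : ~~ odd k || odd m -> S P X -> S (fun i => P ((i + k) %% m)) X.
Proof.
have rot_even t Q : S Q X -> S (fun i => Q ((i + 2 * t) %% m)) X.
  move=> H; elim: t => [|t IH]; first by apply: S_extl H => i hi; rewrite muln0 addn0 modn_small.
  apply: S_extl (fixed_rot2 IH) => i hi /=.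
  by rewrite modnDml -addnA mulnS [2 + _]addnC.
case: (boolP (odd k)) => hk /= hm' H; last by have := rot_even k./2 _ H; rewrite mul2n even_halfK.
have hkm : ~~ odd (k + m) by rewrite oddD hk hm'.
have := rot_even (k + m)./2 _ H; rewrite mul2n (even_halfK hkm).
by apply: S_extl => i hi; rewrite addnA modnDr.
Qed.

(* The composite b^(2n-1) a^(2m-1) b acts as [rhoinv] on the first component
   and, because X 0 = X (n-1), trivially on the second one. *)
Lemma fixed_rhoinv P : S P X -> S (fun i => P (rhoinv m i)) X.
Proof.
move=> H; have := S_b (S_a_iter (2 * m).-1 (S_b_iter (2 * n).-1 H)).
apply: S_ext => [i hi|j hj] /=; rewrite iter_swap01 odd_double_pred //; try lia.
rewrite shifted_swap_cyc //.
by case: (eqVneq j 0) => [->|h0]; [|case: (eqVneq j n.-1) => [->|h1]].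
Qed.

Hypothesis fixed_base : forall P, P 0 = P m.-1 -> S P X.

(* Two equal neighbours i, i+1 can be rotated to the positions m-1, 0,
   provided the rotation needed is allowed by [fixed_rot]. *)
Lemma fixed_pair P i : i < m -> P i = P ((i + 1) %% m) -> odd i || odd m -> S P X.
Proof.
move=> hi hP hodd.
have G : S (fun j => P ((j + i.+1) %% m)) X.
  apply: fixed_base; rewrite add0n (_ : m.-1 + i.+1 = i + m); last lia.
  by rewrite modnDr (modn_small hi) hP addn1.
have hpar : ~~ odd (m.-1 * i.+1) || odd m.
  case: (boolP (odd m)) => hm'; first by rewrite orbT.
  rewrite orbF (negbTE hm') orbF in hodd *.
  by rewrite oddM /= negb_and hodd orbT.
apply: S_extl (fixed_rot hpar G) => j hj /=.
rewrite modnDml -addnA (_ : m.-1 * i.+1 + i.+1 = i.+1 * m); last first.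
  by nia.
by rewrite addnC modnMDl modn_small.
Qed.

Lemma odd_cycle_equal_pair (P : nat -> bool) : odd m ->
  exists2 i, i < m & P i = P ((i + 1) %% m).
Proof.
move=> hodd; case: (boolP [exists i : 'I_m, P i == P ((i + 1) %% m)]).
  by case/existsP => i /eqP h; exists i.
move/existsPn => H; exfalso.
have alt i : i < m -> P i = P 0 (+) odd i.
  elim: i => [|i IH] hi; first by rewrite addbF.
  have := H (Ordinal (ltnW hi)); rewrite /= addn1 modn_small // IH ?(ltnW hi) //.
  by case: (P i.+1); case: (P 0); case: (odd i).
have hm1 : m.-1 < m by lia.
move: (H (Ordinal hm1)); rewrite /= addn1 prednK; last lia.
rewrite modnn alt // (_ : odd m.-1 = false); last lia.
by rewrite addbF eqxx.
Qed.

(* For m even: an equal pair at an even position is moved by [rho] (after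
   a rotation) to the odd position 3. *)
Lemma fixed_even_pair (P : nat -> bool) i : 6 <= m -> ~~ odd m -> i < m -> ~~ odd i ->
  P i = P ((i + 1) %% m) -> S P X.
Proof.
move=> hm6 hme hi hie hP.
have hi1 : i.+1 < m by lia.
set k := i + m - 4; set P2 := fun j => P ((j + k) %% m).
have S2 : S P2 X.
  apply: S_extl (fixed_rhoinv (P := fun j => P2 (rho m j)) _) => [j hj|] /=.
    by rewrite rho_rhoinv.
  apply: (@fixed_pair _ 3) => //; first lia.
  rewrite (modn_small (_ : 3 + 1 < m)) ?rho_mid //; try lia.
  rewrite /P2; have [-> ->] : 4 + k = i + m /\ 5 + k = i.+1 + m by rewrite /k; split; lia.
  by rewrite !modnDr (modn_small hi) (modn_small hi1) hP addn1 modn_small.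
have hpar : ~~ odd (m + 4 - i) || odd m by lia.
apply: S_extl (fixed_rot hpar S2) => j hj /=.
rewrite /P2 modnDml -addnA (_ : m + 4 - i + k = m + m); last by rewrite /k; lia.
by rewrite addnA !modnDr modn_small.
Qed.

(* For m even and P alternating, [rho] creates an equal pair at m-2. *)
Lemma fixed_alternating (P : nat -> bool) : 6 <= m -> ~~ odd m ->
  (forall i, i < m -> P i != P ((i + 1) %% m)) -> S P X.
Proof.
move=> hm6 hme H; have hm1 : m.-1 < m by lia.
have e1 : P m.-1 != P 0 by move: (H _ hm1); rewrite addn1 prednK ?modnn //; lia.
have e0 : P 0 != P 1 by move: (H 0 (ltnW (ltnW hm))); rewrite add0n modn_small //; lia.
apply: S_extl (fixed_rhoinv (P := fun j => P (rho m j)) _) => [j hj|].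
  by rewrite rho_rhoinv.
apply: (@fixed_even_pair _ m.-2) => //; try lia.
have -> : (m.-2 + 1) %% m = m.-1 by rewrite modn_small; lia.
rewrite rho_last // (@rho_mid _ m.-2); try lia.
have -> : m.-2.+1 = m.-1 by lia.
by move: e1 e0; case: (P m.-1); case: (P 0); case: (P 1).
Qed.

Lemma fixed_all : m != 4 -> forall P, S P X.
Proof.
move=> hm4 P; case: (boolP (odd m)) => hmo.
  by case: (odd_cycle_equal_pair P hmo) => i hi hP; apply: (fixed_pair hi hP); rewrite hmo orbT.
case: (boolP [exists i : 'I_m, P i == P ((i + 1) %% m)]) => [/existsP[i /eqP h]|/existsPn H].
  case: (boolP (odd i)) => hio; first by apply: (fixed_pair (ltn_ord i) h); rewrite hio.
  by apply: (fixed_even_pair _ hmo (ltn_ord i) hio h); lia.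
by apply: fixed_alternating => // [|i hi]; [lia|exact: (H (Ordinal hi))].
Qed.

End FixedSecond.

Definition with_all_firsts (Q : nat -> bool) := forall P, S P Q.

Lemma with_all_firsts_cnt Q Q' : with_all_firsts Q -> cnt n Q = cnt n Q' -> with_all_firsts Q'.
Proof.
have h2n : 2 <= n by lia.
apply: (@T_cnt n h2n with_all_firsts) => [Q1 Q2 h VQ P|Q1 VQ P|Q1 VQ P].
- exact: S_extr h (VQ P).
- by apply: S_extl (S_b (VQ (fun i => P (swap01 i)))) => i _ /=; rewrite swap01K.
apply: S_extl (S_a (VQ (fun i => P ((i + m.-1) %% m)))) => i hi /=.
rewrite /cyc modnDml addSnnS (_ : i + m.-1.+1 = i + m); last lia.
by rewrite modnDr modn_small.
Qed.

(* Vectors P with P 0 = P (m-1) are fixed by [reset m]; so applying c to a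
   second component Q gives [fixed_base] for Q pulled back along [reset n]. *)
Lemma with_all_firsts_reset (X Q : nat -> bool) : X 0 = X n.-1 -> m != 4 ->
  agree n (fun j => Q (reset n j)) X -> with_all_firsts Q -> with_all_firsts X.
Proof.
move=> hX hm4 hQX VQ; apply: fixed_all => // P hP.
apply: S_ext (S_c (VQ P)) => // i hi.
by rewrite /reset; case: (eqVneq i m.-1) => [->|].
Qed.

Lemma all_pairs : m != 4 ->
  (exists P j, [/\ P 0 = P m.-1, 0 < cnt m P < m, j < n & S P (single j)]) ->
  forall P Q, S P Q.
Proof.
move=> hm4 /all_singles singles.
have V1 : with_all_firsts (fun j => j < 1).
  apply: (@with_all_firsts_cnt (single 0)) => [P|]; first by apply: singles; lia.
  by apply: cnt_ext => -[|j].
(* The segment [0, k) together with n-1 pulls back along [reset n] to [0, k). *)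
have Vsucc k : 0 < k < n -> with_all_firsts (fun j => j < k) -> with_all_firsts (fun j => j < k.+1).
  case/andP=> hk0 hkn Vk; set Xs := fun j => (j < k) || (j == n.-1).
  have hres : agree n (fun j => reset n j < k) Xs.
    move=> j hj; rewrite /Xs /reset.
    by case: (eqVneq j n.-1) => [->|/negbTE h]; rewrite ?eqxx ?orbT ?h ?orbF.
  apply: (@with_all_firsts_cnt Xs); last by rewrite -(cnt_ext hres) cnt_prefix_reset ?hk0 ?cnt_prefix.
  by apply: with_all_firsts_reset Vk => //; rewrite /Xs eqxx orbT hk0.
have V0 : with_all_firsts (fun j => j < 0).
  apply: (@with_all_firsts_reset _ (single n.-1)) => // [j hj|P]; last by apply: singles; lia.
  by rewrite /single /reset ltn0; case: (eqVneq j n.-1) => [_|/negbTE ->]; [apply/eqP; lia|].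
have Vall k : k <= n -> with_all_firsts (fun j => j < k).
  elim: k => [|k IH] hk //; case: k IH hk => [|k] IH hk //.
  by apply: Vsucc (IH _); lia.
move=> P Q; apply: (with_all_firsts_cnt (Vall _ (cnt_le n Q))).
by rewrite cnt_prefix ?cnt_le.
Qed.

End TwoDimensional.

Definition L_finals (n : nat) : seq nat := if 4 <= n then [:: 1; 3] else [:: 1].

Definition K_from (m : nat) (w : word) (i : nat) : bool :=
  foldl (U_abc_step m) i (rev w) \in [:: 0; 2].
Definition L_from (n : nat) (w : word) (j : nat) : bool :=
  foldl (U_bac_step n) j (rev w) \in L_finals n.

Lemma K_from_rcons m w x i : K_from m (rcons w x) i = K_from m w (U_abc_step m i x).
Proof. by rewrite /K_from rev_rcons. Qed.

Lemma L_from_rcons n w x j : L_from n (rcons w x) j = L_from n w (U_bac_step n j x).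
Proof. by rewrite /L_from rev_rcons. Qed.

Lemma U_abc_step_lt m i x : 2 <= m -> i < m -> U_abc_step m i x < m.
Proof. by move=> hm hi; case: x => /=; [apply: cyc_lt|apply: swap01_lt|apply: reset_lt]; lia. Qed.

Lemma U_bac_step_lt n j x : 2 <= n -> j < n -> U_bac_step n j x < n.
Proof. by move=> hn hj; case: x => /=; [apply: swap01_lt|apply: cyc_lt|apply: reset_lt]; lia. Qed.

Definition realised (m n : nat) (p q : nat -> bool) :=
  exists w, agree m (K_from m w) p /\ agree n (L_from n w) q.

Section Realised.
Variables m n : nat.
Hypothesis hm : 3 <= m.
Hypothesis hn : 3 <= n.

Lemma realised_ext p q p' q' : agree m p p' -> agree n q q' -> realised m n p q -> realised m n p' q'.
Proof. by move=> h1 h2 [w [e1 e2]]; exists w; split=> i hi; rewrite ?e1 ?e2 ?h1 ?h2. Qed.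

Lemma realised_move (x : letter) p q : realised m n p q ->
  realised m n (fun i => p (U_abc_step m i x)) (fun j => q (U_bac_step n j x)).
Proof.
case=> w [e1 e2]; exists (rcons w x); split=> i hi.
  by rewrite K_from_rcons e1 // U_abc_step_lt //; lia.
by rewrite L_from_rcons e2 // U_bac_step_lt //; lia.
Qed.

(* For m <> 4 the closure argument applies once a starting pair (P, {1})
   is realised, with P the preimage of {0, 2} under [reset m]: for n = 3 by
   the word c; for n >= 4 by b b c, since b b rotates the final states
   {1, 3} of L_n to {n-1, 1} and c then merges n-1 into 0. *)
Lemma realised_all_generic : m != 4 -> forall p q, realised m n p q.
Proof.
move=> hm4; apply: (all_pairs hm hn realised_ext (realised_move la) (realised_move lb)
  (realised_move lc) hm4).
set P := fun i => reset m i \in [:: 0; 2].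
have P0 : P 0 by rewrite /P reset0 //; lia.
have P1 : ~~ P 1 by rewrite /P reset_other //; lia.
exists P, 1; split; first by rewrite /P resetN reset0 //; lia.
- by rewrite (cnt_pos _ P0) ?(cnt_lt _ P1) //; lia.
- by lia.
case: (eqVneq n 3) => [n3|hn3].
  by exists [:: lc]; split=> i hi //; rewrite /L_from /L_finals n3 /=; case: i hi => [|[|[|i]]].
exists [:: lb; lb; lc]; split=> i hi; first by rewrite /K_from /= swap01K.
rewrite /L_from /L_finals ifT /=; last lia.
have -> : cyc n (cyc n (reset n i)) = (reset n i + 2) %% n by rewrite -iter_cyc ?reset_lt.
rewrite /single !inE /reset; case: (eqVneq i n.-1) => [->|h].
  by rewrite modn_small; lia.
case: (eqVneq i.+2 n) => [e|e].
  by rewrite (_ : i + 2 = n) ?modnn; lia.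
by rewrite modn_small; lia.
Qed.

End Realised.

(* For m = 4 and n <> 4 the roles of the two automata are exchanged: the
   letters a and b swap roles, and the word a c realises the starting pair. *)
Lemma realised_all_swapped n : 3 <= n -> n != 4 -> forall p q, realised 4 n p q.
Proof.
move=> hn hn4 p q; have h4 : 3 <= 4 by [].
pose S q p := realised 4 n p q.
apply: (@all_pairs n 4 hn h4 S) => // [p1 q1 p2 q2 h1 h2|p1 q1|p1 q1|p1 q1|].
- by apply: realised_ext.
- exact: (realised_move h4 hn lb).
- exact: (realised_move h4 hn la).
- exact: (realised_move h4 hn lc).
set Q := L_from n [:: la; lc].
have Q0 : Q 0 by rewrite /Q /L_from /= reset0 /L_finals //; [case: ifP|lia].
have Q1 : ~~ Q 1 by rewrite /Q /L_from /= reset_other /L_finals //; [case: ifP|lia].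
exists Q, 1; split; first by rewrite /Q /L_from /= resetN reset0 //; lia.
- by rewrite (cnt_pos _ Q0) ?(cnt_lt _ Q1) //; lia.
- by [].
by exists [:: la; lc]; split=> // i hi; rewrite /K_from /single /=; case: i hi => [|[|[|[|i]]]].
Qed.

(** The remaining case m = n = 4 is settled by computing the closure of the
    initial pair under the three moves. *)

Section Closure.
Variables (T : eqType) (act : T -> letter -> T) (t0 : T).

Definition grow (s : seq T) : seq T :=
  undup (s ++ [seq act t la | t <- s] ++ [seq act t lb | t <- s] ++ [seq act t lc | t <- s]).

Lemma grow_reached k t : t \in iter k grow [:: t0] -> exists w, t = foldl act t0 w.
Proof.
have next x w : exists w', act (foldl act t0 w) x = foldl act t0 w'.
  by exists (rcons w x); rewrite foldl_rcons.
elim: k t => [|k IH] t /=; first by rewrite inE => /eqP ->; exists [::].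
rewrite /grow mem_undup !mem_cat.
by case/or4P => [/IH //|||] /mapP[u /IH[w ->] ->]; apply: next.
Qed.

End Closure.

Definition sig4 (w : word) : seq bool * seq bool :=
  ([seq K_from 4 w i | i <- iota 0 4], [seq L_from 4 w j | j <- iota 0 4]).

Definition sig4_step (s : seq bool * seq bool) (x : letter) : seq bool * seq bool :=
  ([seq nth false s.1 (U_abc_step 4 i x) | i <- iota 0 4],
   [seq nth false s.2 (U_bac_step 4 j x) | j <- iota 0 4]).

Lemma sig4E w : sig4 w = foldl sig4_step (sig4 [::]) w.
Proof.
elim/last_ind: w => [//|w x IH]; rewrite foldl_rcons -IH /sig4 /sig4_step.
congr pair; apply/eq_in_map => i; rewrite mem_iota => /andP[_ hi].
  by rewrite (nth_map 0) ?size_iota ?U_abc_step_lt // nth_iota ?U_abc_step_lt ?K_from_rcons.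
by rewrite (nth_map 0) ?size_iota ?U_bac_step_lt // nth_iota ?U_bac_step_lt ?L_from_rcons.
Qed.

Definition bools4 : seq (seq bool) := [seq [seq odd (k %/ 2 ^ i) | i <- iota 0 4] | k <- iota 0 16].

Lemma mem_bools4 (p : nat -> bool) : [seq p i | i <- iota 0 4] \in bools4.
Proof. by rewrite /=; case: (p 0); case: (p 1); case: (p 2); case: (p 3). Qed.

Lemma closure44 : let reached := iter 10 (grow sig4_step) [:: sig4 [::]] in
  all (fun t => t \in reached) [seq (a, b) | a <- bools4, b <- bools4].
Proof. by vm_compute. Qed.

Lemma agree_map N (f g : nat -> bool) :
  [seq f i | i <- iota 0 N] = [seq g i | i <- iota 0 N] -> agree N f g.
Proof. by move/eq_in_map => h i hi; apply: h; rewrite mem_iota. Qed.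

Lemma realised_all44 p q : realised 4 4 p q.
Proof.
have /allP /(_ ([seq p i | i <- iota 0 4], [seq q i | i <- iota 0 4])) := closure44.
case/(_ _)/grow_reached; first by apply: allpairs_f; exact: mem_bools4.
move=> w; rewrite -sig4E => e; exists w.
by split; apply: agree_map; [move/(congr1 fst): e|move/(congr1 snd): e].
Qed.

Theorem realised_all m n : 3 <= m -> 3 <= n -> forall p q, realised m n p q.
Proof.
move=> hm hn; case: (eqVneq m 4) => [->|hm4]; last exact: realised_all_generic.
case: (eqVneq n 4) => [->|hn4]; last exact: realised_all_swapped.
exact: realised_all44.
Qed.

Section Bounds.
Variables (St : finType) (step : St -> letter -> St) (acc : St -> bool) (s0 : St).
Variable L : lang.
Hypothesis HL : forall w, L w <-> acc (foldl step s0 w).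

Lemma sc_upper (R : {set St}) : s0 \in R -> (forall A x, A \in R -> step A x \in R) ->
  exists d s f, @dfa_recognizes #|R| d s f L.
Proof.
move=> hs0 hR; pose rk := enum_rank_in hs0.
exists (fun i x => rk (step (enum_val i) x)), (rk s0), (fun i => acc (enum_val i)).
have run w A : A \in R -> enum_val (foldl (fun i x => rk (step (enum_val i) x)) (rk A) w) = foldl step A w.
  elim: w A => [|x w IH] A hA /=; first by rewrite enum_rankK_in.
  by rewrite enum_rankK_in // IH // hR.
by move=> w /=; rewrite run //; split=> /HL.
Qed.

Lemma residual_acceptance k d s f : @dfa_recognizes k d s f L ->
  forall u z, acc (foldl step (foldl step s0 u) z) = f (foldl d (foldl d s u) z).
Proof. by move=> hrec u z; rewrite -!foldl_cat; apply/idP/idP => [/HL/hrec|/hrec/HL]. Qed.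

Lemma sc_lower (R : {set St}) :
  (forall A, A \in R -> exists w, foldl step s0 w = A) ->
  (forall A B, A \in R -> B \in R -> A != B ->
     exists z, acc (foldl step A z) != acc (foldl step B z)) ->
  forall k d s f, @dfa_recognizes k d s f L -> #|R| <= k.
Proof.
move=> hreach hdist k d s f hrec.
have hw A : exists w, A \in R -> foldl step s0 w = A.
  by case: (boolP (A \in R)) => [/hreach[w hw]|_]; [exists w|exists [::]].
pose wit A := proj1_sig (constructive_indefinite_description _ (hw A)).
have witP A : A \in R -> foldl step s0 (wit A) = A.
  by rewrite /wit; case: (constructive_indefinite_description _ _).
pose g A := foldl d s (wit A).
have ginj : {in R &, injective g}.
  move=> A B hA hB hg; apply/eqP/negPn/negP => /(hdist A B hA hB)[z].
  have hg' : foldl d s (wit A) = foldl d s (wit B) := hg.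
  by rewrite -{1}(witP A hA) -(witP B hB) !(residual_acceptance hrec) hg' eqxx.
rewrite -(card_in_imset ginj); have := max_card (mem (g @: R)).
by rewrite card_ord.
Qed.

End Bounds.

Section ReversedProduct.
Variables m n : nat.
Hypothesis hm : 3 <= m.
Hypothesis hn : 3 <= n.

Let hm2 : 2 <= m. Proof. exact: ltnW. Qed.
Let hn2 : 2 <= n. Proof. exact: ltnW. Qed.

Definition stepK (i : 'I_m) x : 'I_m := Ordinal (U_abc_step_lt x hm2 (ltn_ord i)).
Definition stepL (j : 'I_n) x : 'I_n := Ordinal (U_bac_step_lt x hn2 (ltn_ord j)).
Definition pair_step (q : 'I_m * 'I_n) x := (stepK q.1 x, stepL q.2 x).
Definition origin : 'I_m * 'I_n := (Ordinal (ltnW hm2), Ordinal (ltnW hn2)).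

Definition rev_step (A : {set 'I_m * 'I_n}) x := [set q | pair_step q x \in A].
Definition rev_accepting (A : {set 'I_m * 'I_n}) := origin \in A.

Definition combine (op : bool -> bool -> bool) (X : {set 'I_m}) (Y : {set 'I_n}) :=
  [set q | op (q.1 \in X) (q.2 \in Y)].
Definition combined op := [set combine op p.1 p.2 | p in [set: {set 'I_m} * {set 'I_n}]].
Definition K_set w : {set 'I_m} := [set i : 'I_m | K_from m w i].
Definition L_set w : {set 'I_n} := [set j : 'I_n | L_from n w j].

Lemma foldl_pair_step q u :
  val (foldl pair_step q u).1 = foldl (U_abc_step m) q.1 u /\
  val (foldl pair_step q u).2 = foldl (U_bac_step n) q.2 u.
Proof. by elim: u q => [|x u IH] q //=; exact: IH. Qed.

Lemma foldl_rev_step A z : foldl rev_step A z = [set q | foldl pair_step q (rev z) \in A].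
Proof.
elim/last_ind: z => [|z x IH]; first by apply/setP => q; rewrite inE.
by rewrite foldl_rcons IH rev_rcons; apply/setP => q; rewrite !inE.
Qed.

Lemma foldl_rev_step_combine op w :
  foldl rev_step (combine op (K_set [::]) (L_set [::])) w = combine op (K_set w) (L_set w).
Proof.
elim/last_ind: w => [//|w x IH]; rewrite foldl_rcons IH.
by apply/setP => q; rewrite !inE K_from_rcons L_from_rcons.
Qed.

(* In the product automaton every pair (i, j) is reachable from (0, 0):
   b b leads to (0, 2), then a^k moves the first component (2 is fixed by
   swap01), and b^t the second one. *)
Lemma pair_reachable (q : 'I_m * 'I_n) : exists u, foldl pair_step origin u = q.
Proof.
case: q => i j; set t := (j + n - 2) %% n; set k := iter t swap01 i.
have hk : k < m by rewrite /k iter_swap01; case: (odd t) => //; apply: swap01_lt.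
have runs (T : Type) (f : T -> letter -> T) x y c : foldl f x (nseq c y) = iter c (f^~ y) x.
  by elim: c x => [|c IH] x //=; rewrite IH -iterSr.
set u := [:: lb; lb] ++ nseq k la ++ nseq t lb.
have runK : foldl (U_abc_step m) 0 u = i.
  rewrite /u !foldl_cat /= !runs; change (iter t swap01 (iter k (cyc m) 0) = i).
  rewrite iter_cyc; last lia.
  rewrite add0n modn_small // /k !iter_swap01.
  by case: (odd t); rewrite ?swap01K.
have runL : foldl (U_bac_step n) 0 u = j.
  rewrite /u !foldl_cat /= !runs; change (iter t (cyc n) (iter k swap01 (iter 2 (cyc n) 0)) = j).
  rewrite [iter 2 _ _]iter_cyc; last lia.
  rewrite add0n modn_small; last lia.
  rewrite iter_swap01 (_ : (if odd k then swap01 2 else 2) = 2); last by case: (odd k).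
  rewrite iter_cyc // /t modnDmr (_ : 2 + (j + n - 2) = j + n); last lia.
  by rewrite modnDr modn_small.
exists u; have [e1 e2] := foldl_pair_step origin u.
by rewrite [foldl _ _ _]surjective_pairing; congr pair; apply: val_inj; rewrite ?e1 ?e2.
Qed.

Lemma combined_reachable op A : A \in combined op ->
  exists w, foldl rev_step (combine op (K_set [::]) (L_set [::])) w = A.
Proof.
case/imsetP => [[X Y] _ ->] /=.
have [w [e1 e2]] := realised_all hm hn (fun i => i \in map val (enum X)) (fun j => j \in map val (enum Y)).
exists w; rewrite foldl_rev_step_combine.
by congr combine; apply/setP => i; rewrite inE ?e1 ?e2 // (mem_map val_inj) mem_enum.
Qed.

Lemma rev_distinguishable A B : A != B ->
  exists z, rev_accepting (foldl rev_step A z) != rev_accepting (foldl rev_step B z).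
Proof.
move=> hAB; have [q hq] : exists q, (q \in A) != (q \in B).
  apply/existsP; apply: contraR hAB => /existsPn H.
  by apply/eqP/setP => q; move/negbNE/eqP: (H q).
have [u hu] := pair_reachable q.
by exists (rev u); rewrite /rev_accepting !foldl_rev_step !inE revK hu.
Qed.

Lemma sc_combined (op : bool -> bool -> bool) (L : lang) :
  (forall w, L w <-> op (K_from m w 0) (L_from n w 0)) -> state_complexity L #|combined op|.
Proof.
move=> HL.
have HL' w : L w <-> rev_accepting (foldl rev_step (combine op (K_set [::]) (L_set [::])) w).
  by rewrite foldl_rev_step_combine /rev_accepting inE /= !inE; exact: HL.
split.
  apply: (sc_upper HL'); first by apply/imsetP; exists (K_set [::], L_set [::]).
  move=> A x /imsetP[[X Y] _ ->]; apply/imsetP.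
  exists ([set i | stepK i x \in X], [set j | stepL j x \in Y]) => //.
  by apply/setP => q; rewrite !inE.
move=> k d s f; apply: (sc_lower HL'); first exact: combined_reachable.
by move=> A B _ _; exact: rev_distinguishable.
Qed.

Lemma card_sets (T : finType) : #|{set T}| = 2 ^ #|T|.
Proof. by rewrite -[LHS]cardsT -powersetT card_powerset cardsT. Qed.

Lemma card_nonempty (T : finType) : #|[set X : {set T} | X != set0]| = 2 ^ #|T| - 1.
Proof.
rewrite (_ : [set X : {set T} | X != set0] = [set~ set0]); last by apply/setP => X; rewrite !inE.
by rewrite cardsC1 card_sets subn1.
Qed.

Definition nonempty_pairs :=
  setX [set X : {set 'I_m} | X != set0] [set Y : {set 'I_n} | Y != set0].

Lemma combine_and_inj : {in nonempty_pairs &, injective (fun p => combine andb p.1 p.2)}.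
Proof.
move=> [X Y] [X' Y']; rewrite !inE /= => /andP[hX hY] /andP[hX' hY'] E.
case/set0Pn: hX => x hx; case/set0Pn: hY => y hy.
have : (x, y) \in combine andb X' Y' by rewrite -E inE /= hx hy.
rewrite inE /= => /andP[hx' hy'].
congr pair; apply/setP => i.
  by have := congr1 (fun A : {set 'I_m * 'I_n} => (i, y) \in A) E; rewrite /= !inE /= hy hy' !andbT.
by have := congr1 (fun A : {set 'I_m * 'I_n} => (x, i) \in A) E; rewrite /= !inE /= hx hx'.
Qed.

(* Products: the empty set, and one product per pair of nonempty sets. *)
Lemma card_combined_and : #|combined andb| = (2 ^ m - 1) * (2 ^ n - 1) + 1.
Proof.
have E : combined andb = set0 |: [set combine andb p.1 p.2 | p in nonempty_pairs].
  apply/setP => A; rewrite inE; apply/imsetP/orP.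
  - case=> [[X Y] _ ->] /=; case: (boolP ((X != set0) && (Y != set0))) => h.
      by right; apply/imsetP; exists (X, Y); rewrite // inE /= !inE.
    left; rewrite inE; apply/eqP/setP => q; rewrite !inE.
    by move: h; rewrite negb_and !negbK => /orP[/eqP->|/eqP->]; rewrite inE ?andbF.
  - case=> [|/imsetP [[X Y] _ ->]]; last by exists (X, Y).
    by rewrite inE => /eqP->; exists (set0, set0) => //; apply/setP => q; rewrite !inE.
have n0 : set0 \notin [set combine andb p.1 p.2 | p in nonempty_pairs].
  apply/imsetP => -[[X Y]]; rewrite inE /= !inE => /andP[/set0Pn[x hx] /set0Pn[y hy]] E0.
  have : (x, y) \in combine andb X Y by rewrite inE /= hx hy.
  by rewrite -E0 inE.
rewrite E cardsU1 n0 card_in_imset; last exact: combine_and_inj.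
by rewrite cardsX !card_nonempty !card_ord addnC.
Qed.

(* Complementation exchanges unions and products (De Morgan). *)
Lemma card_combined_or : #|combined orb| = #|combined andb|.
Proof.
have key X Y : combine orb X Y = ~: combine andb (~: X) (~: Y).
  by apply/setP => q; rewrite !inE negb_and !negbK.
have -> : combined orb = [set ~: A | A in combined andb].
  apply/setP => A; apply/imsetP/imsetP.
  - case=> [[X Y] _ ->] /=; exists (combine andb (~: X) (~: Y)); last exact: key.
    by apply/imsetP; exists (~: X, ~: Y).
  - case=> B /imsetP [[X Y] _ ->] ->; exists (~: X, ~: Y); first by rewrite inE.
    by rewrite /= key !setCK.
by rewrite card_imset //; exact: setC_inj.
Qed.

(* X x (complement of Y) ranges over the same sets as X x Y. *)
Lemma card_combined_diff : #|combined (fun a b => a && ~~ b)| = #|combined andb|.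
Proof.
suff -> : combined (fun a b => a && ~~ b) = combined andb by [].
apply/setP => A; apply/imsetP/imsetP => -[[X Y] _ ->] /=;
  by exists (X, ~: Y); rewrite ?inE //; apply/setP => q; rewrite !inE ?negbK.
Qed.

Definition zero_m : 'I_m := origin.1.

Lemma card_notin0 : #|[set X : {set 'I_m} | zero_m \notin X]| = 2 ^ (m - 1).
Proof.
set A0 := [set X : {set 'I_m} | zero_m \notin X].
have EC : ~: A0 = [set ~: X | X in A0].
  apply/setP => X; rewrite !inE negbK; apply/idP/imsetP.
  - by move=> h; exists (~: X); rewrite ?setCK // !inE negbK.
  - by case=> Y; rewrite inE => hY ->; rewrite inE.
have := cardsC A0; rewrite EC card_imset; last exact: setC_inj.
rewrite card_sets card_ord (_ : 2 ^ m = 2 * 2 ^ (m - 1)); first lia.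
by rewrite -expnS; congr (2 ^ _); lia.
Qed.

(* A symmetric difference determines its two arguments up to complementing
   both; normalising by 0 \notin X gives a bijection. *)
Lemma card_combined_xor : #|combined (fun a b => a != b)| = 2 ^ (m + n - 1).
Proof.
set D := setX [set X : {set 'I_m} | zero_m \notin X] [set: {set 'I_n}].
have E : combined (fun a b => a != b) = [set combine (fun a b => a != b) p.1 p.2 | p in D].
  apply/setP => A; apply/imsetP/imsetP => -[[X Y] hXY ->]; last by exists (X, Y).
  case: (boolP (zero_m \in X)) => h; last by exists (X, Y); rewrite // inE /= !inE h.
  exists (~: X, ~: Y); first by rewrite inE /= !inE negbK h.
  by apply/setP => q; rewrite !inE /=; case: (q.1 \in X); case: (q.2 \in Y).
have inj : {in D &, injective (fun p => combine (fun a b => a != b) p.1 p.2)}.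
  move=> [X Y] [X' Y']; rewrite !inE /= => /andP[hX _] /andP[hX' _] E0.
  have eY : Y = Y'.
    apply/setP => j; have := congr1 (fun A : {set 'I_m * 'I_n} => (zero_m, j) \in A) E0.
    by rewrite /= !inE /= (negbTE hX) (negbTE hX'); case: (j \in Y); case: (j \in Y').
  rewrite -eY in E0 *; congr pair; apply/setP => i.
  have := congr1 (fun A : {set 'I_m * 'I_n} => (i, origin.2) \in A) E0; rewrite /= !inE /=.
  by case: (i \in X); case: (i \in X'); case: (origin.2 \in Y).
rewrite E card_in_imset // cardsX card_notin0 cardsT card_sets card_ord -expnD.
by congr (2 ^ _); lia.
Qed.

End ReversedProduct.

Lemma lang_ops (A B : lang) (a b : word -> bool) :
  (forall w, A w <-> a w) -> (forall w, B w <-> b w) -> forall w,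
  [/\ union_lang A B w <-> a w || b w, inter_lang A B w <-> a w && b w,
      diff_lang A B w <-> a w && ~~ b w & symdiff_lang A B w <-> a w != b w].
Proof.
move=> hA hB w; rewrite /union_lang /inter_lang /diff_lang /symdiff_lang.
by case: (hA w) (hB w); case: (a w); case: (b w) => hA1 hA2 [hB1 hB2];
  split; split=> /=; intuition.
Qed.

Theorem theorem3 (m n : nat) (hm : 3 <= m) (hn : 3 <= n) :
  [/\ state_complexity (union_lang (rev_lang (K_lang m)) (rev_lang (L_lang n)))
        ((2 ^ m - 1) * (2 ^ n - 1) + 1),
      state_complexity (inter_lang (rev_lang (K_lang m)) (rev_lang (L_lang n)))
        ((2 ^ m - 1) * (2 ^ n - 1) + 1),
      state_complexity (diff_lang (rev_lang (K_lang m)) (rev_lang (L_lang n)))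
        ((2 ^ m - 1) * (2 ^ n - 1) + 1)
    & state_complexity (symdiff_lang (rev_lang (K_lang m)) (rev_lang (L_lang n)))
        (2 ^ (m + n - 1))].
Proof.
have hK w : rev_lang (K_lang m) w <-> K_from m w 0 by [].
have hL w : rev_lang (L_lang n) w <-> L_from n w 0.
  by rewrite /rev_lang /L_lang /L_from /L_finals /U_bac; case: ifP.
have ops w := lang_ops hK hL w.
rewrite -(card_combined_and m n) -(card_combined_xor hm hn).
split.
- by rewrite -card_combined_or; apply: sc_combined => // w; case: (ops w).
- by apply: sc_combined => // w; case: (ops w).
- by rewrite -card_combined_diff; apply: sc_combined => // w; case: (ops w).
- by apply: sc_combined => // w; case: (ops w).
Qed.
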